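(* Let $p$ be a binary word of length $l$ all of whose runs have size at least $2$. Then $p$ has an internal zero at $n$ for every $n\ge l+1$.
   Context: $c_p(w)$ is the number of occurrences of $p$ as a (not necessarily consecutive) subsequence of $w$; $B_{n,p}(k)$ is the number of binary words of length $n$ with $c_p(w)=k$. A run is a maximal block of consecutive equal letters; its size is its length. $p$ has an internal zero at $n$ if there exist $0\le k_1<k_2<k_3$ with $B_{n,p}(k_1)\ne0$, $B_{n,p}(k_2)=0$, $B_{n,p}(k_3)\ne0$. *)

From mathcomp Require Import all_boot.
Set Implicit Arguments. Unset Strict Implicit. Unset Printing Implicit Defensive.

(* c_p(w): number of occurrences of p as a (not necessarily consecutive)
   subsequence of w, i.e. the number of choices of positions of w (selection
   masks m of length |w|) such that the selected letters spell p. *)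
Definition occ (p w : seq bool) : nat :=
  #|[set m : (size w).-tuple bool | mask m w == p]|.

Definition B (n : nat) (p : seq bool) (k : nat) : nat :=
  #|[set w : n.-tuple bool | occ p w == k]|.

Fixpoint runs_aux (b : bool) (c : nat) (s : seq bool) : seq nat :=
  match s with
  | [::] => [:: c]
  | x :: s' => if x == b then runs_aux b c.+1 s' else c :: runs_aux x 1 s'
  end.

Definition runs (s : seq bool) : seq nat :=
  match s with
  | [::] => [::]
  | x :: s' => runs_aux x 1 s'
  end.

Definition internal_zero (p : seq bool) (n : nat) : Prop :=
  exists k1 k2 k3, [/\ k1 < k2, k2 < k3,
    B n p k1 != 0, B n p k2 = 0 & B n p k3 != 0].

From mathcomp Require Import all_boot zify.
Set Implicit Arguments. Unset Strict Implicit. Unset Printing Implicit Defensive.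

(* The heart of the proof is that such a [p] never
   occurs exactly twice: given two distinct occurrences, look at the first
   position where they differ; one picks the letter [x] there, the other
   does not.  Since every run of [p] has size at least 2, this [x] of [p]
   has an equal neighbour, and shifting picks among consecutive copies of
   [x] produces a third occurrence ([third_occurrence], [occ_neq2]).

   For
   [p = x :: p'] and [n > |p|], the constant word of letter [~~ x] has no
   occurrence, and [x :: x :: p'] padded by [x] has at least two, hence at
   least three: [B n p] vanishes at 2 but not at 0 nor at some value > 2. *)

Lemma runs_aux_singleton_head x r : head (~~ x) r != x -> 1 \in runs_aux x 1 r.
Proof. by case: r => [|y r] //= y_neq_x; rewrite (negbTE y_neq_x) in_cons. Qed.

Lemma runs_aux_singleton q b c x r :
  last b q != x -> head (~~ x) r != x -> 1 \in runs_aux b c (q ++ x :: r).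
Proof.
elim: q b c => [|y q IHq] b c /= last_neq head_neq.
  by rewrite eq_sym (negbTE last_neq) in_cons runs_aux_singleton_head ?orbT.
by case: eqP => [<-|_]; [exact: IHq | rewrite in_cons IHq ?orbT].
Qed.

Lemma letter_has_twin q x r : all (fun n => 2 <= n) (runs (q ++ x :: r)) ->
  (exists q', q = rcons q' x) \/ (exists r', r = x :: r').
Proof.
move=> runs_ge2.
have twin : (last (~~ x) q == x) || (head (~~ x) r == x).
  apply/negPn/negP => /norP [last_neq head_neq].
  have : 1 \in runs (q ++ x :: r).
    case: q {runs_ge2} last_neq => [|y q] /= last_neq.
      exact: runs_aux_singleton_head.
    exact: runs_aux_singleton.
  by move/(allP runs_ge2).
clear runs_ge2; case/orP: twin => [last_q | head_r]; [left | right].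
  case/lastP: q last_q => [|q' y]; first by case: x.
  by rewrite last_rcons => /eqP ->; exists q'.
case: r head_r => [|y r]; first by case: x.
by move=> /eqP /= ->; exists r.
Qed.

Lemma mask_first_pick (m s : bitseq) x r : size m = size s -> mask m s = x :: r ->
  exists v s' m', [/\ s = v ++ x :: s', m = nseq (size v) false ++ true :: m',
    size m' = size s' & mask m' s' = r].
Proof.
elim: s m => [|y s IHs] [|b m] //= [size_m].
case: b => /= [[<- <-] | /(IHs _ size_m) [v [s' [m' [-> -> size_m' mask_m']]]]].
  by exists [::], s, m.
by exists (y :: v), s', m'.
Qed.

Lemma mask_last_pick (m s : bitseq) x q : size m = size s -> mask m s = rcons q x ->
  exists s1 s2 m1, [/\ s = s1 ++ x :: s2, m = m1 ++ true :: nseq (size s2) false,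
    size m1 = size s1 & mask m1 s1 = q].
Proof.
move=> size_m mask_m.
have size_rev_m : size (rev m) = size (rev s) by rewrite !size_rev.
have : mask (rev m) (rev s) = x :: rev q by rewrite -rev_mask // mask_m rev_rcons.
case/(mask_first_pick size_rev_m) => v [s' [m' [rev_s rev_m size_m' mask_m']]].
exists (rev s'), (rev v), (rev m'); split; rewrite ?size_rev //.
- by rewrite -[s]revK rev_s rev_cat rev_cons cat_rcons.
- by rewrite -[m]revK rev_m rev_cat rev_cons cat_rcons rev_nseq.
- by rewrite -rev_mask // mask_m' revK.
Qed.

Lemma first_difference (A B : bitseq) : size A = size B -> A != B ->
  exists u a A' B', A = u ++ a :: A' /\ B = u ++ ~~ a :: B'.
Proof.
elim: A B => [|a A IHA] [|b B] //= [size_AB].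
have [<- | a_neq_b] := eqVneq a b.
  rewrite eqseq_cons eqxx => /(IHA _ size_AB) [u [c [A' [B' [-> ->]]]]].
  by exists (a :: u), c, A', B'.
move=> _; exists [::], a, A, B; split => //.
by case: a b a_neq_b => [] [].
Qed.

Lemma cat_cons_neq (u X Y : bitseq) a : u ++ a :: X != u ++ ~~ a :: Y.
Proof. by rewrite eqseq_cat // eqxx /= eqseq_cons; case: a. Qed.

(* If an occurrence of [rcons q x] in [w1] is followed by a letter [x] and
   then by an occurrence of [x :: r], the last pick in [w1] may be traded
   for that letter [x]: the result selects [rcons q x ++ x :: r] and
   differs from [u] on [w1]. *)
Lemma mask_trade_last (u w1 w2 B : bitseq) x q r :
  size u = size w1 -> size B = size w2 ->
  mask u w1 = rcons q x -> mask B w2 = x :: r ->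
  exists C, [/\ size C = size (w1 ++ x :: w2),
    mask C (w1 ++ x :: w2) = rcons q x ++ x :: r & forall D, C != u ++ D].
Proof.
move=> size_u size_B /(mask_last_pick size_u) [s1 [s2 [m1 [-> -> size_m1 mask_m1]]]].
move=> mask_B.
exists (m1 ++ false :: nseq (size s2) false ++ true :: B); split.
- by rewrite !size_cat /= size_cat /= size_nseq; lia.
- rewrite -catA cat_cons !mask_cat ?size_nseq //= mask_cat ?size_nseq //=.
  by rewrite mask_false mask_B mask_m1 cat_rcons.
- by move=> D; rewrite -catA cat_cons (cat_cons_neq _ _ _ false).
Qed.

(* In an occurrence of [x :: x :: r], either of the two first picks may be
   dropped; this yields two distinct occurrences of [x :: r]. *)
Lemma mask_drop_double (B w : bitseq) x r : size B = size w -> mask B w = x :: x :: r ->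
  exists D1 D2, [/\ D1 != D2, size D1 = size w, size D2 = size w,
    mask D1 w = x :: r & mask D2 w = x :: r].
Proof.
move=> /mask_first_pick pick /pick [v [w' [B' [-> _ size_B' /mask_first_pick]]]].
case/(_ size_B') => v' [w'' [B'' [-> _ size_B'' mask_B'']]].
exists (nseq (size v) false ++ false :: nseq (size v') false ++ true :: B'').
exists (nseq (size v) false ++ true :: nseq (size v') false ++ false :: B'').
split.
- exact: (cat_cons_neq _ _ _ false).
- by rewrite !size_cat /= !size_cat /= !size_nseq size_B''.
- by rewrite !size_cat /= !size_cat /= !size_nseq size_B''.
- by rewrite !mask_cat ?size_nseq //= !mask_false mask_cat ?size_nseq //= mask_false mask_B''.
- by rewrite !mask_cat ?size_nseq //= !mask_false mask_cat ?size_nseq //= mask_false mask_B''.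
Qed.

Section ThirdOccurrence.

Variable p : seq bool.
Hypothesis p_runs : all (fun n => 2 <= n) (runs p).

(* The picked [x] has an equal neighbour in [p]: if it
   is the preceding letter, [mask_trade_last] applies to the second
   occurrence; if it is the following letter, the second occurrence picks
   [x :: x :: _] in [w2] after skipping [x], and [mask_drop_double] gives two
   new occurrences, at least one of them different from the first. *)
Lemma third_occurrence_at (u w1 w2 A B : bitseq) x :
  size u = size w1 -> size A = size w2 -> size B = size w2 ->
  mask (u ++ true :: A) (w1 ++ x :: w2) = p ->
  mask (u ++ false :: B) (w1 ++ x :: w2) = p ->
  exists C, [/\ size C = size (w1 ++ x :: w2), mask C (w1 ++ x :: w2) = p,
    C != u ++ true :: A & C != u ++ false :: B].
Proof.
move=> size_u size_A size_B.
rewrite !mask_cat //= => mask_A mask_B; move: p_runs.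
rewrite -{}mask_A in mask_B * => runs_ge2.
have {}mask_B : mask B w2 = x :: mask A w2.
  by apply/eqP; move/eqP: mask_B; rewrite eqseq_cat // eqxx.
have [[q last_x] | [r head_x]] := letter_has_twin runs_ge2.
  have [C [size_C mask_C neq_C]] := mask_trade_last size_u size_B last_x mask_B.
  by exists C; rewrite size_C mask_C last_x !neq_C.
rewrite head_x in mask_B.
have [D1 [D2 [neq_D size_D1 size_D2 mask_D1 mask_D2]]] :=
  mask_drop_double size_B mask_B.
have occ_D (D : bitseq) : size D = size w2 -> mask D w2 = x :: r ->
    [/\ size (u ++ true :: D) = size (w1 ++ x :: w2),
      mask (u ++ true :: D) (w1 ++ x :: w2) = mask u w1 ++ x :: mask A w2
      & u ++ true :: D != u ++ false :: B].
  move=> size_D mask_D; split; last exact: (cat_cons_neq _ _ _ true).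
    by rewrite !size_cat /= size_u size_D.
  by rewrite mask_cat //= mask_D head_x.
have [eq_D1 | neq_D1] := eqVneq (u ++ true :: D1) (u ++ true :: A).
  have [size_C mask_C neq_B] := occ_D D2 size_D2 mask_D2.
  exists (u ++ true :: D2); split => //; rewrite -eq_D1.
  by rewrite eqseq_cat // eqxx /= eqseq_cons eq_sym.
have [size_C mask_C neq_B] := occ_D D1 size_D1 mask_D1.
by exists (u ++ true :: D1).
Qed.

(* Any two distinct occurrences of [p] in [w] yield a third one: split [w]
   at the first position where the two masks differ. *)
Lemma third_occurrence (A B w : bitseq) :
  size A = size w -> size B = size w -> mask A w = p -> mask B w = p -> A != B ->
  exists C, [/\ size C = size w, mask C w = p, C != A & C != B].
Proof.
move=> size_A size_B mask_A mask_B neq_AB.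
have [u [a [A' [B' [def_A def_B]]]]] :=
  first_difference (etrans size_A (esym size_B)) neq_AB.
have size_u : size u < size w by rewrite -size_A def_A size_cat /= addnS ltnS leq_addr.
have [w1 [x [w2 [def_w size_w1]]]] :
    exists w1 x w2, w = w1 ++ x :: w2 /\ size u = size w1.
  exists (take (size u) w), (nth false w (size u)), (drop (size u).+1 w).
  by rewrite -drop_nth // cat_take_drop size_take size_u.
have size_A' : size A' = size w2.
  by move: size_A; rewrite def_A def_w !size_cat /= size_w1 => /addnI [].
have size_B' : size B' = size w2.
  by move: size_B; rewrite def_B def_w !size_cat /= size_w1 => /addnI [].
subst w A B; clear neq_AB size_A size_B.
case: a size_A' mask_A size_B' mask_B => size_A' mask_A size_B' mask_B.
  exact: third_occurrence_at.
have [C [size_C mask_C neq_B neq_A]] :=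
  third_occurrence_at size_w1 size_B' size_A' mask_B mask_A.
by exists C.
Qed.

Lemma occ_neq2 (w : seq bool) : occ p w != 2.
Proof.
apply/negP => /cards2P [A [B [neq_AB occ_AB]]].
have occ_mem (m : (size w).-tuple bool) : (mask m w == p) = (m == A) || (m == B).
  by move/setP/(_ m): occ_AB; rewrite !inE.
have /eqP mask_A : mask A w == p by rewrite occ_mem eqxx.
have /eqP mask_B : mask B w == p by rewrite occ_mem eqxx orbT.
have [C [/eqP size_C mask_C neq_A neq_B]] :=
  third_occurrence (size_tuple A) (size_tuple B) mask_A mask_B neq_AB.
move/eqP: mask_C; rewrite (occ_mem (Tuple size_C)) -!val_eqE /=.
by rewrite (negbTE neq_A) (negbTE neq_B).
Qed.

End ThirdOccurrence.

Lemma occ_gt1 (p w m1 m2 : seq bool) : size m1 = size w -> size m2 = size w ->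
  mask m1 w = p -> mask m2 w = p -> m1 != m2 -> 1 < occ p w.
Proof.
move=> /eqP size_m1 /eqP size_m2 mask_m1 mask_m2 neq_m.
have : [set Tuple size_m1; Tuple size_m2]
    \subset [set m : (size w).-tuple bool | mask m w == p].
  by apply/subsetP => m; rewrite !inE => /orP [] /eqP -> /=; rewrite ?mask_m1 ?mask_m2.
by move/subset_leq_card; rewrite cards2 -val_eqE /= neq_m.
Qed.

(* A word with a leading letter [x] occurs at least twice in the word obtained
   by doubling that letter and padding with [x]: either copy of the leading
   [x] can be picked. *)
Lemma occ_doubled_head x (p' : seq bool) k : 1 < occ (x :: p') (x :: x :: p' ++ nseq k x).
Proof.
apply: (@occ_gt1 _ _ (false :: true :: nseq (size p') true ++ nseq k false)
                     (true :: false :: nseq (size p') true ++ nseq k false)) => //=;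
  rewrite ?size_cat ?size_nseq //.
all: by rewrite mask_cat ?size_nseq // mask_true // mask_false cats0.
Qed.

Lemma occ_absent_letter x (p w : seq bool) : x \in p -> x \notin w -> occ p w = 0.
Proof.
move=> x_in_p x_notin_w; apply/eqP; rewrite cards_eq0; apply/eqP/setP => m.
rewrite !inE; apply/negbTE/eqP => mask_m.
by move: x_in_p; rewrite -mask_m => /mem_mask; rewrite (negbTE x_notin_w).
Qed.

Lemma B_occ_neq0 n (p : seq bool) (w : n.-tuple bool) : B n p (occ p w) != 0.
Proof. by rewrite /B cards_eq0; apply/set0Pn; exists w; rewrite inE. Qed.

Lemma B_eq0 n (p : seq bool) k : (forall w : seq bool, occ p w != k) -> B n p k = 0.
Proof.
move=> occ_neq; apply/eqP; rewrite cards_eq0; apply/eqP/setP => w.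
by rewrite !inE (negbTE (occ_neq w)).
Qed.

Unset Implicit Arguments.

Theorem mainTheorem11 (p : seq bool) :
  0 < size p ->
  all (fun r => 2 <= r) (runs p) ->
  forall n, size p < n -> internal_zero p n.
Proof.
case: p => [|x p'] // _ p_runs n size_n.
set w := x :: x :: p' ++ nseq (n - (size p').+2) x.
have /eqP size_w : size w = n by rewrite /= size_cat size_nseq; move: size_n => /=; lia.
exists 0, 2, (occ (x :: p') w); split => //.
- by rewrite ltn_neqAle eq_sym (occ_neq2 p_runs) occ_doubled_head.
- have := B_occ_neq0 (x :: p') (nseq_tuple n (~~ x)).
  by rewrite (@occ_absent_letter x) ?mem_head // mem_nseq; case: (x); rewrite andbF.
- exact: B_eq0 (occ_neq2 p_runs).
- exact: B_occ_neq0 _ (Tuple size_w).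
Qed.
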